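(* For the population protocol USD and every $t\ge1$: (1) $\mathbb E_{t-1}[\gamma_t]=\gamma_{t-1}+\frac2n\big((1-2\beta_{t-1})\gamma_{t-1}+\|\alpha_{t-1}\|_3^3\big)+\frac{\beta_{t-1}-\gamma_{t-1}}{n^2}$. (2) $\mathrm{Var}_{t-1}[\gamma_t]\le\frac{9\|\alpha_{t-1}\|_3^3}{n^2}$. (3) Conditioned on $\mathcal F_{t-1}$, $\gamma_t-\mathbb E_{t-1}[\gamma_t]$ satisfies the $\big(\frac{8\alpha^{\max}_{t-1}}{n},\frac{9\|\alpha_{t-1}\|_3^3}{n^2}\big)$-Bernstein condition.
   Context: Vertex set $V$, $|V|=n$; opinions in $\Sigma=[k]\cup\{\bot\}$ ($\bot$ = undecided). USD update rule: $\mathsf{update}(\sigma_1,\sigma_2)=\bot$ if $\sigma_1,\sigma_2\in[k]$ and $\sigma_1\ne\sigma_2$; $=\sigma_2$ if $\sigma_1=\bot$; $=\sigma_1$ otherwise. Population protocol USD: given $\mathrm{opn}_t\in\Sigma^V$, an ordered pair $(u,v)$ is chosen uniformly from $V\times V$ (with replacement), $\mathrm{opn}_{t+1}(u)=\mathsf{update}(\mathrm{opn}_t(u),\mathrm{opn}_t(v))$, and all other vertices keep their opinions. Notation: $\alpha_t(i)=|\{u:\mathrm{opn}_t(u)=i\}|/n$, $\beta_t=\sum_{i\in[k]}\alpha_t(i)$, $\gamma_t=\sum_{i\in[k]}\alpha_t(i)^2$, $\|\alpha_t\|_3^3=\sum_{i\in[k]}\alpha_t(i)^3$, $\alpha^{\max}_t=\max_{i\in[k]}\alpha_t(i)$.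 $(\mathcal F_t)$ is the natural filtration; $\mathbb E_{t-1},\mathrm{Var}_{t-1}$ are conditional on $\mathcal F_{t-1}$. Bernstein condition: for $D,s\ge0$, $X$ satisfies the $(D,s)$-Bernstein condition if $\mathbb E[e^{\lambda X}]\le\exp\!\big(\frac{\lambda^2 s/2}{1-|\lambda|D/3}\big)$ for all real $\lambda$ with $|\lambda|D<3$. Conditioned on $\mathcal F_{t-1}$: the same with $\mathbb E_{t-1}$, almost surely. *)

From mathcomp Require Import all_boot all_order all_algebra.
From mathcomp Require Import reals sequences exp.
Set Implicit Arguments. Unset Strict Implicit. Unset Printing Implicit Defensive.
Import Order.TTheory GRing.Theory Num.Theory.
Local Open Scope ring_scope.

(* Opinions: Sigma = [k] ∪ {⊥} is rendered as option 'I_k, None = ⊥. *)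
Definition opinion (k : nat) := option 'I_k.

Definition update (k : nat) (s1 s2 : opinion k) : opinion k :=
  match s1, s2 with
  | Some i, Some j => if i == j then Some i else None
  | None, _ => s2
  | Some i, None => Some i
  end.

Definition step (V : finType) (k : nat) (opn : {ffun V -> opinion k}) (u v : V)
  : {ffun V -> opinion k} :=
  [ffun w => if w == u then update (opn u) (opn v) else opn w].

Section Quantities.
Variables (R : realType) (V : finType) (k : nat).
Implicit Types (opn : {ffun V -> opinion k}).

Definition nV : R := #|V|%:R.

Definition alpha opn (i : 'I_k) : R := #|[set u | opn u == Some i]|%:R / nV.
Definition beta opn : R := \sum_(i < k) alpha opn i.
Definition gamma opn : R := \sum_(i < k) alpha opn i ^+ 2.
Definition norm3cube opn : R := \sum_(i < k) alpha opn i ^+ 3.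
Definition alpha_max opn : R := \big[Num.max/0]_(i < k) alpha opn i.

(* Conditional expectation E_{t-1}[f(opn_t)] given opn_{t-1} = opn:
   (u,v) uniform on V x V. *)
Definition Estep opn (f : {ffun V -> opinion k} -> R) : R :=
  (nV ^+ 2)^-1 * \sum_(u : V) \sum_(v : V) f (step opn u v).

Definition Varstep opn (f : {ffun V -> opinion k} -> R) : R :=
  Estep opn (fun c => (f c - Estep opn f) ^+ 2).

Definition bernstein_step opn (X : {ffun V -> opinion k} -> R) (D s : R) : Prop :=
  forall lam : R, `|lam| * D < 3 ->
    Estep opn (fun c => expR (lam * X c))
      <= expR ((lam ^+ 2 * s / 2) / (1 - `|lam| * D / 3)).

End Quantities.

From mathcomp Require Import all_boot all_order all_algebra.
From mathcomp Require Import reals sequences exp.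
From mathcomp Require Import boolp classical_sets topology normedtype.
From mathcomp Require Import ring lra.
Import Order.TTheory GRing.Theory Num.Theory.
Set Implicit Arguments. Unset Strict Implicit. Unset Printing Implicit Defensive.
Local Open Scope ring_scope.

(* An interaction (u, v) changes only the opinion of u, so every count
   n alpha(i) moves by some d_i in {-1, 0, 1}, with at most one d_a nonzero
   and then a held by u or v (hence alpha(a) >= 1/n).  Expanding the squares,
   gamma_t - gamma_{t-1} = sum_i (2 alpha(i) d_i / n + d_i^2 / n^2), and the
   averages of d_i and d_i^2 over the n^2 pairs are explicit quadratic
   expressions in alpha and beta, which gives (1).  The increment is at most
   3 alpha(a) / n in absolute value, so its square is at most
   sum_i d_i^2 9 alpha(i)^2 / n^2, whose average is at most 9 |alpha|_3^3 / n^2;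
   this bounds the variance (2).  Finally a variable bounded by D with variance
   at most s is (D, s)-Bernstein, by the bound
   e^y <= 1 + y + y^2 / (2 (1 - |y|/3)) for |y| < 3, and
   |gamma_t - E gamma_t| <= 6 alpha_max / n gives (3). *)

Lemma expn3_fact_le (j : nat) : (2 * 3 ^ j <= (j.+2)`!)%N.
Proof.
elim: j => [|j IH] //.
by rewrite factS expnS mulnCA; apply: leq_mul.
Qed.

Lemma sum_exprn_le (R : realFieldType) (q : R) (m : nat) : 0 <= q < 1 ->
  \sum_(j < m) q ^+ j <= (1 - q)^-1.
Proof.
move=> /andP[q0 q1].
have q1_gt0 : 0 < 1 - q by rewrite subr_gt0.
rewrite -(ler_pM2l q1_gt0) mulfV ?gt_eqF // -opprB mulNr -subrX1 opprB lerBlDr lerDl.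
exact: exprn_ge0.
Qed.

(* Compare the tail of the exponential series termwise with y^2/2 times the
   geometric series of ratio |y|/3, using (j+2)! >= 2 * 3^j. *)
Lemma expR_le_bernstein (R : realType) (y : R) : `|y| < 3 ->
  expR y <= 1 + y + y ^+ 2 / (2 * (1 - `|y| / 3)).
Proof.
move=> y3.
set q := `|y| / 3.
have q0 : 0 <= q by rewrite /q divr_ge0.
have q1 : q < 1 by rewrite /q ltr_pdivrMr // mul1r.
rewrite /expR; apply: limr_le; first exact: is_cvg_series_exp_coeff.
near=> m.
have -> : m = (m - 2).+2 by rewrite -addn2 subnK //; near: m; exists 2%N.
rewrite /series /= big_nat_recl // big_nat_recl //.
rewrite /exp_coeff /= expr0 expr1 fact0 factS fact0 !divr1 addrA lerD2l.
apply: (@le_trans _ _ (\sum_(0 <= j < m - 2) (y ^+ 2 / 2) * q ^+ j)).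
  apply: ler_sum => j _.
  have fact_ge : (2 * 3 ^+ j : R) <= (j.+2)`!%:R.
    by rewrite -(natrX R 3 j) -natrM ler_nat expn3_fact_le.
  have p0 : (0 : R) < 2 * 3 ^+ j by rewrite mulr_gt0 // exprn_gt0.
  apply: (@le_trans _ _ (`|y| ^+ j.+2 / (j.+2)`!%:R)).
    apply: ler_wpM2r; first by rewrite invr_ge0.
    by rewrite -normrX ler_norm.
  apply: (@le_trans _ _ (`|y| ^+ j.+2 / (2 * 3 ^+ j))).
    apply: ler_wpM2l; first exact: exprn_ge0.
    by rewrite lef_pV2 // posrE (lt_le_trans p0 fact_ge).
  rewrite /q expr_div_n -[j.+2]addn2 exprD -normrX real_normK ?num_real //.
  rewrite le_eqVlt; apply/orP; left; apply/eqP; field.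
  by rewrite gt_eqF // exprn_gt0.
rewrite -big_distrr /= big_mkord invfM mulrA ler_wpM2l ?sum_exprn_le ?q0 //.
by rewrite divr_ge0 // sqr_ge0.
Unshelve. all: by end_near.
Qed.

Section StepExpectation.
Variables (R : realType) (V : finType) (k : nat).
Variable opn : {ffun V -> opinion k}.
Hypothesis V_gt0 : (0 < #|V|)%N.
Local Notation n := (nV R V).
Local Notation cfg := {ffun V -> opinion k}.
Implicit Types f h : cfg -> R.

Lemma nV_gt0 : 0 < n.
Proof. by rewrite ltr0n. Qed.

Lemma nV_neq0 : n != 0.
Proof. by rewrite gt_eqF // nV_gt0. Qed.

Lemma eq_Estep f h :
  (forall u v, f (step opn u v) = h (step opn u v)) -> Estep opn f = Estep opn h.
Proof.
by move=> fh; congr (_ * _); apply: eq_bigr => u _; apply: eq_bigr => v _.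
Qed.

Lemma ler_Estep f h :
  (forall u v, f (step opn u v) <= h (step opn u v)) -> Estep opn f <= Estep opn h.
Proof.
move=> fh; apply: ler_wpM2l; first by rewrite invr_ge0 exprn_ge0.
by apply: ler_sum => u _; apply: ler_sum => v _.
Qed.

Lemma EstepD f h : Estep opn (fun c => f c + h c) = Estep opn f + Estep opn h.
Proof.
rewrite /Estep -mulrDr -big_split; congr (_ * _).
by apply: eq_bigr => u _; rewrite big_split.
Qed.

Lemma EstepZ a f : Estep opn (fun c => a * f c) = a * Estep opn f.
Proof.
by rewrite /Estep; under eq_bigr do rewrite -mulr_sumr; rewrite -mulr_sumr mulrCA.
Qed.

Lemma Estep_cst (a : R) : Estep opn (fun=> a) = a.
Proof.
rewrite /Estep !sumr_const -mulrnA -mulr_natr natrM -expr2 -/(nV R V).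
by rewrite mulrC mulfK // expf_neq0 // nV_neq0.
Qed.

Lemma Estep_center f : Estep opn (fun c => f c - Estep opn f) = 0.
Proof. by rewrite EstepD Estep_cst subrr. Qed.

Lemma Varstep_le f (a : R) :
  Varstep opn f <= Estep opn (fun c => (f c - a) ^+ 2).
Proof.
set m := Estep opn f.
rewrite (@eq_Estep _ (fun c => (f c - m) ^+ 2 + (2 * (m - a) * (f c - m) + (m - a) ^+ 2)));
  last by move=> u v; ring.
by rewrite !EstepD EstepZ Estep_center Estep_cst mulr0 add0r lerDl sqr_ge0.
Qed.

Lemma Estep_norm_le f (b : R) :
  (forall u v, `|f (step opn u v)| <= b) -> `|Estep opn f| <= b.
Proof.
move=> fb; have fb' u v : - b <= f (step opn u v) <= b by rewrite -ler_norml.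
rewrite ler_norml; apply/andP; split.
- by rewrite -(Estep_cst (- b)); apply: ler_Estep => u v; case/andP: (fb' u v).
- by rewrite -(Estep_cst b); apply: ler_Estep => u v; case/andP: (fb' u v).
Qed.

(* The exponential bound applies pointwise with |lam * X| <= |lam| D, and its
   expectation is 1 + (lam^2 / (2 (1 - |lam| D / 3))) Var <= exp of the same. *)
Lemma bernstein_step_of_bounded f (D s : R) :
  (forall u v, `|f (step opn u v) - Estep opn f| <= D) -> Varstep opn f <= s ->
  bernstein_step opn (fun c => f c - Estep opn f) D s.
Proof.
move=> fD Vs lam lamD; set m := Estep opn f.
have denom_gt0 : 0 < 1 - `|lam| * D / 3 by lra.
set K := lam ^+ 2 / (2 * (1 - `|lam| * D / 3)).
have K_ge0 : 0 <= K by rewrite divr_ge0 ?sqr_ge0 // mulr_ge0 // ltW.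
have exp_le u v : expR (lam * (f (step opn u v) - m)) <=
    1 + lam * (f (step opn u v) - m) + K * (f (step opn u v) - m) ^+ 2.
  set x := f (step opn u v) - m.
  have lamx : `|lam * x| <= `|lam| * D by rewrite normrM ler_wpM2l ?fD.
  apply: (le_trans (@expR_le_bernstein _ _ (le_lt_trans lamx lamD))); rewrite lerD2l.
  rewrite /K exprMn mulrAC ler_wpM2r ?sqr_ge0 // ler_wpM2l ?sqr_ge0 //.
  rewrite lef_pV2 ?posrE ?mulr_gt0 //; last by lra.
  by rewrite ler_wpM2l //; lra.
apply: (le_trans (@ler_Estep (fun c => expR (lam * (f c - m)))
  (fun c => 1 + lam * (f c - m) + K * (f c - m) ^+ 2) exp_le)).
rewrite !EstepD EstepZ Estep_center Estep_cst EstepZ mulr0 addr0.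
apply: (le_trans _ (expR_ge1Dx _)); rewrite lerD2l.
have -> : lam ^+ 2 * s / 2 / (1 - `|lam| * D / 3) = K * s.
  by rewrite /K; field; rewrite subr_eq0 gt_eqF.
by rewrite ler_wpM2l.
Qed.

End StepExpectation.

Section OpinionChange.
Variables (R : realType) (k : nat).
Implicit Types o : opinion k.

Lemma Some_eqE (x y : 'I_k) : (Some x == Some y :> opinion k) = (x == y).
Proof. by []. Qed.

Lemma None_eqE (y : 'I_k) : (None == Some y :> opinion k) = false.
Proof. by []. Qed.

Definition chi (i : 'I_k) o : R := (o == Some i)%:R.
Definition decided o : R := (o != None)%:R.

Definition dcount (i : 'I_k) o1 o2 : R := chi i (update o1 o2) - chi i o1.

Lemma sum_chi o : \sum_i chi i o = decided o.
Proof.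
case: o => [a|]; last by rewrite big1.
rewrite (bigD1 a) //= big1 ?addr0 /chi ?eqxx // => i ia.
by rewrite Some_eqE eq_sym (negbTE ia).
Qed.

Lemma dcountE i o1 o2 :
  dcount i o1 o2 = (1 - decided o1) * chi i o2 - chi i o1 * (decided o2 - chi i o2).
Proof.
rewrite /dcount /decided /chi.
case: o1 => [a|] /=; rewrite ?None_eqE; last by ring.
case: o2 => [b|] /=; rewrite ?None_eqE; last by ring.
have [<-|ab] := eqVneq a b; first by case: (_ == _) => /=; ring.
rewrite None_eqE !Some_eqE; have [<-|ai] := eqVneq a i => /=; last by ring.
by rewrite eq_sym (negbTE ab) /=; ring.
Qed.

Lemma dcount_sqrE i o1 o2 :
  dcount i o1 o2 ^+ 2 = (1 - decided o1) * chi i o2 + chi i o1 * (decided o2 - chi i o2).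
Proof.
rewrite /dcount /decided /chi.
case: o1 => [a|] /=; rewrite ?None_eqE; last by case: (_ == _) => /=; ring.
case: o2 => [b|] /=; rewrite ?None_eqE; last by ring.
have [<-|ab] := eqVneq a b; first by case: (_ == _) => /=; ring.
rewrite None_eqE !Some_eqE; have [<-|ai] := eqVneq a i => /=; last by ring.
by rewrite eq_sym (negbTE ab) /=; ring.
Qed.

Lemma dcount_single o1 o2 :
  (forall i, dcount i o1 o2 = 0) \/
  exists a, [/\ dcount a o1 o2 ^+ 2 = 1, forall i, i != a -> dcount i o1 o2 = 0
    & (o1 == Some a) || (o2 == Some a)].
Proof.
rewrite /dcount /chi.
case: o1 => [a|]; case: o2 => [b|] /=; try by left => i; rewrite subrr.
- have [<-|ab] := eqVneq a b; first by left => i; rewrite subrr.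
  right; exists a; split; rewrite ?eqxx //= ?Some_eqE ?None_eqE ?eqxx /=.
    by rewrite sub0r sqrrN expr1n.
  by move=> i ia; rewrite Some_eqE eq_sym (negbTE ia) subrr.
- right; exists b; split; rewrite ?eqxx //= ?Some_eqE ?None_eqE ?eqxx /=.
    by rewrite subr0 expr1n.
  by move=> i bi; rewrite Some_eqE eq_sym (negbTE bi) subrr.
Qed.

End OpinionChange.

Section USDStep.
Variables (R : realType) (V : finType) (k : nat).
Variable opn : {ffun V -> opinion k}.
Hypothesis V_gt0 : (0 < #|V|)%N.
Local Notation n := (nV R V).
Local Notation alpha := (alpha R).
Local Notation dc i u v := (dcount R i (opn u) (opn v)).

Lemma alpha_step i u v : alpha (step opn u v) i = alpha opn i + dc i u v / n.
Proof.
rewrite /alpha -mulrDl; congr (_ / _).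
rewrite (cardsD1 u [set w | step opn u v w == Some i]) (cardsD1 u [set w | opn w == Some i]).
have -> : [set w | step opn u v w == Some i] :\ u = [set w | opn w == Some i] :\ u.
  by apply/setP => w; rewrite !inE ffunE; case: eqP.
by rewrite !inE ffunE eqxx /dcount /chi !natrD; ring.
Qed.

Lemma gamma_step_sub u v : gamma R (step opn u v) - gamma R opn =
  \sum_i (2 * alpha opn i / n * dc i u v + dc i u v ^+ 2 / n ^+ 2).
Proof.
rewrite /gamma -sumrB; apply: eq_bigr => i _; rewrite alpha_step.
by field; apply: nV_neq0.
Qed.

Lemma sum_chi_opn i : \sum_u chi R i (opn u) = n * alpha opn i.
Proof.
rewrite /alpha mulrC mulfVK ?nV_neq0 // -sum1_card natr_sum [RHS]big_mkcond /=.
by apply: eq_bigr => u _; rewrite inE /chi; case: (_ == _).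
Qed.

Lemma sum_decided_opn : \sum_u decided R (opn u) = n * beta R opn.
Proof.
under eq_bigr do rewrite -sum_chi.
by rewrite exchange_big /beta mulr_sumr; apply: eq_bigr => i _; apply: sum_chi_opn.
Qed.

Lemma sum_cst_nV (a : R) : \sum_(u : V) a = n * a.
Proof. by rewrite sumr_const mulr_natl. Qed.

Lemma sum_dcount i : \sum_u \sum_v dc i u v =
  n ^+ 2 * (alpha opn i - 2 * alpha opn i * beta R opn + alpha opn i ^+ 2).
Proof.
under eq_bigr do under eq_bigr do rewrite dcountE.
under eq_bigr do rewrite sumrB -!big_distrr /=.
rewrite sumrB -!big_distrl /= !sumrB !sum_decided_opn !sum_chi_opn sum_cst_nV; ring.
Qed.

Lemma sum_dcount_sqr i : \sum_u \sum_v dc i u v ^+ 2 =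
  n ^+ 2 * (alpha opn i - alpha opn i ^+ 2).
Proof.
under eq_bigr do under eq_bigr do rewrite dcount_sqrE.
under eq_bigr do rewrite big_split -!big_distrr /=.
rewrite big_split -!big_distrl /= sumrB sumrB sum_decided_opn sum_chi_opn sum_cst_nV; ring.
Qed.

Lemma Estep_gamma : Estep opn (fun c => gamma R c) =
  gamma R opn + 2 / n * ((1 - 2 * beta R opn) * gamma R opn + norm3cube R opn)
  + (beta R opn - gamma R opn) / n ^+ 2.
Proof.
have -> : Estep opn (fun c => gamma R c) =
    gamma R opn + Estep opn (fun c => gamma R c - gamma R opn).
  by rewrite EstepD Estep_cst // addrC subrK.
rewrite /Estep; under eq_bigr do under eq_bigr do rewrite gamma_step_sub.
under eq_bigr do rewrite exchange_big /=.
rewrite exchange_big mulr_sumr /= -addrA; congr (_ + _).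
set b := beta R opn.
rewrite (eq_bigr (fun i => 2 / n * ((1 - 2 * b) * alpha opn i ^+ 2 + alpha opn i ^+ 3)
    + (alpha opn i - alpha opn i ^+ 2) / n ^+ 2)); last first.
  move=> i _; under eq_bigr do rewrite big_split -mulr_sumr -mulr_suml /=.
  rewrite big_split -mulr_sumr -mulr_suml /= sum_dcount sum_dcount_sqr.
  by rewrite -/b; field; apply: nV_neq0.
rewrite big_split /= -mulr_sumr -mulr_suml big_split sumrB -mulr_sumr.
by rewrite /gamma /norm3cube /b /beta.
Qed.

Lemma alpha_ge_inv a u : opn u = Some a -> n^-1 <= alpha opn a.
Proof.
move=> opn_u; rewrite /alpha -[X in X <= _]mul1r ler_pM2r ?invr_gt0 ?nV_gt0 //.
by rewrite (cardsD1 u) inE opn_u eqxx natrD lerDl.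
Qed.

Lemma gamma_step_sub_cases u v :
  (gamma R (step opn u v) = gamma R opn /\ forall i, dc i u v = 0) \/
  exists a, [/\ `|gamma R (step opn u v) - gamma R opn| <= 3 * alpha opn a / n,
    dc a u v ^+ 2 = 1 & forall i, i != a -> dc i u v = 0].
Proof.
have [dc0|[a [dc_sq dc_other opn_a]]] := dcount_single R (opn u) (opn v).
  left; split => //; apply/eqP; rewrite -subr_eq0 gamma_step_sub big1 // => i _.
  by rewrite dc0 mulr0 expr0n mul0r addr0.
right; exists a; split => //.
have h_gt0 : 0 < n^-1 by rewrite invr_gt0 nV_gt0.
have h_le : n^-1 <= alpha opn a.
  by case/orP: opn_a => /eqP; apply: alpha_ge_inv.
rewrite gamma_step_sub (bigD1 a) //= big1 ?addr0; last first.
  by move=> i ia; rewrite dc_other // mulr0 expr0n mul0r addr0.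
have : (dc a u v == 1) || (dc a u v == -1) by rewrite -sqrf_eq1 dc_sq.
rewrite dc_sq -exprVn; move: (alpha opn a) (n^-1) (dc a u v) h_gt0 h_le => al h d h0 hal.
by case/orP=> /eqP->; rewrite ler_norml; apply/andP; split; nra.
Qed.

Lemma sqr_gamma_step_sub_le u v : (gamma R (step opn u v) - gamma R opn) ^+ 2 <=
  \sum_i dc i u v ^+ 2 * (9 * alpha opn i ^+ 2 / n ^+ 2).
Proof.
have [[-> dc0]|[a [sub_le dc_sq dc_other]]] := gamma_step_sub_cases u v.
  by rewrite subrr expr0n big1 // => i _; rewrite dc0 expr0n mul0r.
rewrite (bigD1 a) //= big1 ?addr0; last by move=> i ia; rewrite dc_other // expr0n mul0r.
rewrite dc_sq mul1r -real_normK ?num_real //.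
have -> : 9 * alpha opn a ^+ 2 / n ^+ 2 = (3 * alpha opn a / n) ^+ 2.
  by field; apply: nV_neq0.
by move: sub_le (normr_ge0 (gamma R (step opn u v) - gamma R opn)); move: (`|_|) => x; nra.
Qed.

Lemma alpha_max_ge0 (c : {ffun V -> opinion k}) : 0 <= alpha_max R c.
Proof.
rewrite /alpha_max; elim/big_ind: _ => // [x y x0 _|i _]; first by rewrite le_max x0.
by rewrite divr_ge0.
Qed.

Lemma norm_gamma_step_sub_le u v :
  `|gamma R (step opn u v) - gamma R opn| <= 3 * alpha_max R opn / n.
Proof.
have [[-> _]|[a [sub_le _ _]]] := gamma_step_sub_cases u v.
  by rewrite subrr normr0 !mulr_ge0 ?invr_ge0 ?alpha_max_ge0.
apply: (le_trans sub_le); rewrite ler_pM2r ?invr_gt0 ?nV_gt0 // ler_pM2l //.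
exact: le_bigmax.
Qed.

Lemma Varstep_gamma_le :
  Varstep opn (fun c => gamma R c) <= 9 * norm3cube R opn / n ^+ 2.
Proof.
apply: (le_trans (Varstep_le opn V_gt0 _ (gamma R opn))).
apply: (@le_trans _ _ ((n ^+ 2)^-1 * \sum_u \sum_v \sum_i
     dc i u v ^+ 2 * (9 * alpha opn i ^+ 2 / n ^+ 2))).
  rewrite ler_wpM2l ?invr_ge0 ?exprn_ge0 //.
  by apply: ler_sum => u _; apply: ler_sum => v _; apply: sqr_gamma_step_sub_le.
under eq_bigr do rewrite exchange_big.
rewrite exchange_big mulr_sumr /norm3cube mulr_sumr mulr_suml; apply: ler_sum => i _.
under eq_bigr do rewrite -mulr_suml.
rewrite -mulr_suml sum_dcount_sqr.
have -> : (n ^+ 2)^-1 * (n ^+ 2 * (alpha opn i - alpha opn i ^+ 2) *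
    (9 * alpha opn i ^+ 2 / n ^+ 2)) =
    9 * alpha opn i ^+ 3 / n ^+ 2 - 9 * alpha opn i ^+ 4 / n ^+ 2.
  by field; apply: nV_neq0.
have al_ge0 : 0 <= alpha opn i by rewrite divr_ge0.
by rewrite lerBlDr lerDl !mulr_ge0 ?exprn_ge0 ?invr_ge0 ?sqr_ge0.
Qed.

Lemma norm_gamma_step_center_le u v :
  `|gamma R (step opn u v) - Estep opn (fun c => gamma R c)| <= 8 * alpha_max R opn / n.
Proof.
have center : `|gamma R opn - Estep opn (fun c => gamma R c)| <= 3 * alpha_max R opn / n.
  have -> : gamma R opn - Estep opn (fun c => gamma R c) =
      - Estep opn (fun c => gamma R c - gamma R opn).
    by rewrite EstepD Estep_cst // opprD opprK addrC.
  by rewrite normrN; apply: Estep_norm_le => // u' v'; apply: norm_gamma_step_sub_le.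
apply: (le_trans (ler_distD (gamma R opn) _ _)).
apply: (le_trans (lerD (norm_gamma_step_sub_le u v) center)).
rewrite -!mulrDl ler_pM2r ?invr_gt0 ?nV_gt0 // ler_wpM2r ?alpha_max_ge0 //; lra.
Qed.

End USDStep.

Theorem mainTheorem13 (R : realType) (V : finType) (k : nat)
    (opn : {ffun V -> opinion k}) :
  (0 < #|V|)%N ->
  let n : R := nV R V in
  let g := fun c : {ffun V -> opinion k} => gamma R c in
  [/\ Estep opn g =
        gamma R opn
        + 2 / n * ((1 - 2 * beta R opn) * gamma R opn + norm3cube R opn)
        + (beta R opn - gamma R opn) / n ^+ 2,
      Varstep opn g <= 9 * norm3cube R opn / n ^+ 2
    & bernstein_step opn (fun c => g c - Estep opn g)
        (8 * alpha_max R opn / n) (9 * norm3cube R opn / n ^+ 2)].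
Proof.
move=> V_gt0 n g; split.
- exact: Estep_gamma.
- exact: Varstep_gamma_le.
- apply: bernstein_step_of_bounded => //; last exact: Varstep_gamma_le.
  exact: norm_gamma_step_center_le.
Qed.
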